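(* Let $p$ be an odd prime, $\lambda$ a partition, and suppose that for some abacus display of $\lambda$ the runners $i,j\in\{0,\dots,p-1\}$ satisfy conditions (F1), (F2), (F3). If $\kappa_p(\lambda)\ne\lambda$, then $i\ne j$.
   Context: Abacus: for $\lambda$ with at most $s$ nonzero parts, $\beta_k=\lambda_k-k+s$ ($1\le k\le s$). Position $q\ge0$ lies on runner $q\bmod p$ and is occupied iff $q$ equals some $\beta_k$. For runner $t$, $\lambda^{(t)}$ is the partition whose $m$-th part is the number of unoccupied positions on runner $t$ smaller than the $m$-th largest occupied position on runner $t$. (F1) $\lambda^{(k)}=\varnothing$ for all $k\notin\{i,j\}$; (F2) if position $i+ap$ is unoccupied then every position $b>i+ap$ not on runner $i$ is unoccupied; (F3) if position $j+cp$ is occupied then every position $d<j+cp$ not on runner $j$ is occupied. $\kappa_p(\lambda)$ is the $p$-core of $\lambda$. *)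

From mathcomp Require Import all_boot.
Set Implicit Arguments. Unset Strict Implicit. Unset Printing Implicit Defensive.

Definition is_partition (lam : seq nat) : bool :=
  sorted geq lam && all (fun x => 0 < x) lam.

(* Beta-numbers with s beads (s >= size lam):
   beta_k = lam_k - k + s for 1 <= k <= s  (0-indexed: k -> k.+1).
   Listed in strictly decreasing order. *)
Definition beta (s : nat) (lam : seq nat) : seq nat :=
  [seq nth 0 lam k + s - k.+1 | k <- iota 0 s].

Definition occupied (s : nat) (lam : seq nat) (q : nat) : bool :=
  q \in beta s lam.

(* lam^(t): the m-th part is the number of unoccupied positions on runner t
   smaller than the m-th largest occupied position on runner t
   (zero parts dropped). *)
Definition quotient_part (p s : nat) (lam : seq nat) (t : nat) : seq nat :=
  [seq x <- [seq count (fun q => (q %% p == t) && ~~ occupied s lam q) (iota 0 b)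
            | b <- [seq b <- beta s lam | b %% p == t]] | 0 < x].

Definition F1 (p s : nat) (lam : seq nat) (i j : nat) : Prop :=
  forall k, k < p -> k != i -> k != j -> quotient_part p s lam k = [::].

Definition F2 (p s : nat) (lam : seq nat) (i : nat) : Prop :=
  forall a, ~~ occupied s lam (i + a * p) ->
  forall b, i + a * p < b -> b %% p != i -> ~~ occupied s lam b.

Definition F3 (p s : nat) (lam : seq nat) (j : nat) : Prop :=
  forall c, occupied s lam (j + c * p) ->
  forall d, d < j + c * p -> d %% p != j -> occupied s lam d.

Definition part_of_beta (B : seq nat) : seq nat :=
  let s := size B in
  let B' := sort geq B in
  [seq x <- [seq nth 0 B' k + k.+1 - s | k <- iota 0 s] | 0 < x].

(* Beta-set of the p-core: on each runner t push all beads up. *)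
Definition core_beta (p s : nat) (lam : seq nat) : seq nat :=
  flatten [seq [seq t + m * p | m <- iota 0 (count (fun b => b %% p == t) (beta s lam))]
          | t <- iota 0 p].

Definition kappa (p : nat) (lam : seq nat) : seq nat :=
  part_of_beta (core_beta p (size lam) lam).

(* By (F1) every runner other than i has empty quotient, i.e. no
   bead there sits below a gap of its runner.  On runner i a gap i + a p directly
   above a bead i + (a+1) p is impossible too: the position i + a p + 1 lies
   strictly between them and off runner i (as p > 1), so (F2) empties it while
   (F3) fills it.  Hence every bead is pushed up its runner, the abacus is its
   own p-core, and kappa_p lam = lam. *)

From mathcomp Require Import all_boot zify.

Set Implicit Arguments.
Unset Strict Implicit.
Unset Printing Implicit Defensive.

Lemma perm_iota_of_pred_closed (S : seq nat) :
  uniq S -> (forall x, x.+1 \in S -> x \in S) -> perm_eq S (iota 0 (size S)).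
Proof.
move=> uS predS.
have downS y x : y <= x -> x \in S -> y \in S.
  move=> le_yx; elim: x le_yx => [|x IHx]; first by rewrite leqn0 => /eqP->.
  rewrite leq_eqVlt ltnS => /orP[/eqP-> // | le_yx /predS].
  exact: IHx.
have lt_size x : x \in S -> x < size S.
  move=> xS; rewrite -[x.+1](size_iota 0); apply: uniq_leq_size (iota_uniq _ _) _.
  by move=> y; rewrite mem_iota ltnS => /andP[_ /downS]; apply.
apply: uniq_perm; rewrite ?iota_uniq //.
have sub : {subset S <= iota 0 (size S)} by move=> x /lt_size; rewrite mem_iota.
by case: (uniq_min_size uS sub); rewrite ?size_iota.
Qed.

Lemma modSn_neq p x : 1 < p -> x.+1 %% p != x %% p.
Proof. by move=> p_gt1; rewrite eqn_mod_dvd // subSnn dvdn1 neq_ltn p_gt1 orbT. Qed.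

Lemma modnBr d m : d <= m -> m - d = m %[mod d].
Proof. by move=> le_dm; rewrite -{2}(subnK le_dm) modnDr. Qed.

Lemma perm_runner (p t : nat) (S : seq nat) : 0 < p -> uniq S ->
  (forall x, x \in S -> x %% p = t) ->
  (forall x, x \in S -> p <= x -> x - p \in S) ->
  perm_eq S [seq t + m * p | m <- iota 0 (size S)].
Proof.
move=> p_gt0 uS onS downS.
have divnK x : x \in S -> t + x %/ p * p = x by move=> xS; rewrite -(onS x xS) addnC -divn_eq.
have -> : S = [seq t + m * p | m <- [seq x %/ p | x <- S]].
  by rewrite -map_comp -[LHS]map_id; apply/esym/eq_in_map => x /divnK.
rewrite !size_map -(size_map (divn^~ p) S); apply/perm_map/perm_iota_of_pred_closed.
  rewrite map_inj_in_uniq // => x y xS yS eq_xy.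
  by rewrite -(divnK x xS) -(divnK y yS) eq_xy.
move=> m /mapP[x xS m_def].
have x_def : x = t + m * p + p by rewrite -{1}(divnK x xS) -m_def mulSn addnCA addnC.
have xpS : x - p \in S by apply: downS; rewrite // x_def leq_addl.
apply/mapP; exists (x - p) => //.
by apply/eqP; rewrite -(eqn_pmul2r p_gt0) -(eqn_add2l t) divnK // x_def addnK.
Qed.

Lemma perm_flatten_fibres (T : eqType) (f : T -> nat) (s : seq T) (n : nat) :
  all (fun x => f x < n) s ->
  perm_eq s (flatten [seq [seq x <- s | f x == t] | t <- iota 0 n]).
Proof.
move=> /all_filterP {1}<-; elim: n => [|n IHn].
  by rewrite (@eq_filter _ _ pred0) ?filter_pred0.
rewrite -addn1 iotaD map_cat flatten_cat /= cats0 add0n.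
rewrite -(perm_filterC (fun x => f x < n)) -!filter_predI.
apply: perm_cat.
  by rewrite (@eq_filter _ _ (fun x => f x < n)) // => x /=; lia.
by rewrite (@eq_filter _ _ (fun x => f x == n)) // => x /=; lia.
Qed.

Definition beads_up (p s : nat) (lam : seq nat) : Prop :=
  forall q, occupied s lam q -> p <= q -> occupied s lam (q - p).

Lemma perm_core_beta p s lam : 0 < p -> uniq (beta s lam) -> beads_up p s lam ->
  perm_eq (core_beta p s lam) (beta s lam).
Proof.
move=> p_gt0 uB upB; rewrite perm_sym.
have ltp : all (fun x => x %% p < p) (beta s lam) by apply/allP => x _; rewrite ltn_mod.
apply: perm_trans (@perm_flatten_fibres _ (modn^~ p) _ p ltp) _.
apply/permP => a; rewrite !count_flatten -!map_comp; congr sumn.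
apply/eq_in_map => t _ /=; apply/permP; rewrite -size_filter.
apply: perm_runner; rewrite ?filter_uniq //.
  by move=> x; rewrite mem_filter => /andP[/eqP].
move=> x; rewrite !mem_filter => /andP[/eqP <- xB] le_px.
by rewrite modnBr // eqxx; apply: upB.
Qed.

Lemma sorted_geq_nth (lam : seq nat) :
  sorted geq lam -> {homo nth 0 lam : x y / x <= y >-> y <= x}.
Proof.
move=> sorted_lam x y le_xy; have [y_lt|y_ge] := ltnP y (size lam); last by rewrite nth_default.
apply: (sorted_leq_nth (leT := geq)) => //; rewrite ?inE //; last exact: leq_ltn_trans y_lt.
- by move=> a b c /= ba cb; apply: leq_trans ba.
- exact: leqnn.
Qed.

Lemma sorted_beta s lam : sorted geq lam -> sorted gtn (beta s lam).
Proof.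
move=> sorted_lam; apply: (homo_sorted_in (P := gtn s)) (iota_ltn_sorted 0 s).
  move=> x y; rewrite !inE /= => x_lt y_lt lt_xy.
  have := sorted_geq_nth sorted_lam (ltnW lt_xy); lia.
by apply/allP => x; rewrite mem_iota.
Qed.

Lemma uniq_beta s lam : sorted geq lam -> uniq (beta s lam).
Proof. by move/(sorted_beta s); rewrite gtn_sorted_uniq_geq => /andP[]. Qed.

Lemma part_of_beta_perm B s lam : is_partition lam -> size lam <= s ->
  perm_eq B (beta s lam) -> part_of_beta B = lam.
Proof.
case/andP=> sorted_lam pos_lam le_size permB.
have tr_geq : transitive geq by move=> a b c /= ba cb; apply: leq_trans ba.
have sortB : sort geq B = beta s lam.
  rewrite (perm_sortP _ _ _ _ _ permB) ?sorted_sort //.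
  - by move: (sorted_beta s sorted_lam); rewrite gtn_sorted_uniq_geq => /andP[].
  - by move=> a b; apply: leq_total.
  - by move=> a b /andP[/= ba ab]; apply/anti_leq; rewrite ba ab.
rewrite /part_of_beta sortB (perm_size permB) size_map size_iota.
have -> : [seq nth 0 (beta s lam) k + k.+1 - s | k <- iota 0 s] = mkseq (nth 0 lam) s.
  apply/eq_in_map => k; rewrite mem_iota => /andP[_ k_lt].
  by rewrite (nth_map 0) ?size_iota ?nth_iota // add0n; lia.
rewrite -(subnKC le_size); elim: (s - size lam) => [|d IHd].
  by rewrite addn0 mkseq_nth; apply/all_filterP.
by rewrite addnS mkseqS filter_rcons nth_default ?leq_addr.
Qed.

Lemma kappa_id p lam : 0 < p -> is_partition lam -> beads_up p (size lam) lam ->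
  kappa p lam = lam.
Proof.
move=> p_gt0 lamP upB; have /andP[sorted_lam _] := lamP.
exact/(part_of_beta_perm lamP)/perm_core_beta/upB/uniq_beta.
Qed.

Lemma occupied_addn d lam q :
  occupied (size lam + d) lam (q + d) = occupied (size lam) lam q.
Proof.
rewrite /occupied /beta; apply/mapP/mapP => -[k]; rewrite !mem_iota /= => k_lt q_def.
  have k_small : k < size lam.
    by rewrite ltnNge; apply/negP => k_ge; move: q_def; rewrite nth_default //; lia.
  by exists k; rewrite ?mem_iota //; lia.
by exists k; rewrite ?mem_iota //; lia.
Qed.

Lemma beads_up_addn p d lam :
  beads_up p (size lam + d) lam -> beads_up p (size lam) lam.
Proof.
move=> upB q; rewrite -(occupied_addn d) -(occupied_addn d) => occ le_pq.
by rewrite addnBAC //; apply: upB; rewrite // (leq_trans le_pq) ?leq_addr.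
Qed.

Lemma quotient_part_nil_beads_up p s lam t q : 0 < p ->
  quotient_part p s lam t = [::] -> occupied s lam q -> q %% p = t -> p <= q ->
  occupied s lam (q - p).
Proof.
move=> p_gt0 nil_t occ_q q_t le_pq.
have bead_q : q \in [seq b <- beta s lam | b %% p == t] by rewrite mem_filter q_t eqxx.
move/eqP: nil_t; rewrite /quotient_part -[_ == _]negbK -has_filter.
move=> /hasPn/(_ _ (map_f _ bead_q)); rewrite -has_count => /hasPn/(_ (q - p)).
rewrite mem_iota /= modnBr // q_t eqxx negbK; apply; lia.
Qed.

Lemma F2_F3_beads_up p s lam i q : 1 < p -> F2 p s lam i -> F3 p s lam i ->
  occupied s lam q -> q %% p = i -> p <= q -> occupied s lam (q - p).
Proof.
move=> p_gt1 F2i F3i occ_q q_i le_pq; apply/negPn/negP => gap.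
set a := (q - p) %/ p.
have gap_def : i + a * p = q - p by rewrite [RHS](divn_eq (q - p) p) modnBr // q_i addnC.
have bead_def : i + a.+1 * p = q by rewrite mulSn addnCA gap_def subnKC.
have off_i : (q - p).+1 %% p != i by rewrite -q_i -(modnBr le_pq) modSn_neq.
have gap_a : ~~ occupied s lam (i + a * p) by rewrite gap_def.
have bead_a : occupied s lam (i + a.+1 * p) by rewrite bead_def.
have above_gap : i + a * p < (q - p).+1 by rewrite gap_def.
have below_bead : (q - p).+1 < i + a.+1 * p by rewrite bead_def; lia.
by move: (F2i a gap_a _ above_gap off_i); rewrite (F3i _ bead_a _ below_bead off_i).
Qed.

Lemma beads_up_of_F p s lam i : 1 < p ->
  F1 p s lam i i -> F2 p s lam i -> F3 p s lam i -> beads_up p s lam.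
Proof.
move=> p_gt1 F1i F2i F3i q occ_q le_pq.
have [q_i|q_ni] := eqVneq (q %% p) i; first exact: F2_F3_beads_up q_i le_pq.
have p_gt0 : 0 < p by apply: ltnW.
by apply: quotient_part_nil_beads_up (F1i _ _ q_ni q_ni) occ_q _ le_pq; rewrite ?ltn_mod.
Qed.

Theorem lemma4p5 (p : nat) (lam : seq nat) (i j : nat) :
  prime p -> odd p -> is_partition lam -> i < p -> j < p ->
  (exists s, size lam <= s /\ F1 p s lam i j /\ F2 p s lam i /\ F3 p s lam j) ->
  kappa p lam <> lam -> i <> j.
Proof.
move=> p_prime _ lamP _ _ [s [le_size [F1s [F2s F3s]]]] not_core eq_ij; subst j.
apply/not_core/kappa_id; rewrite ?prime_gt0 //.
apply: (@beads_up_addn p (s - size lam)); rewrite subnKC //.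
exact: beads_up_of_F (prime_gt1 p_prime) F1s F2s F3s.
Qed.
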